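(* Let $q\ge 7$ be an odd integer. Then the achromatic number of $K_6\square K_q$ is at least $2q+3$.
   Context: For a finite simple graph $G$ and a finite colour set $C$, a vertex colouring $f:V(G)\to C$ is complete if for any two distinct colours $c_1,c_2\in C$ there is an edge $v_1v_2\in E(G)$ with $f(v_i)=c_i$, $i=1,2$. The achromatic number of $G$ is the maximum number of colours in a proper complete vertex colouring of $G$. The Cartesian product $G_1\square G_2$ has vertex set $V(G_1)\times V(G_2)$, with $(u_1,u_2)$ adjacent to $(w_1,w_2)$ iff either $u_1w_1\in E(G_1)$ and $u_2=w_2$, or $u_2w_2\in E(G_2)$ and $u_1=w_1$. *)

From mathcomp Require Import all_boot.
Set Implicit Arguments. Unset Strict Implicit. Unset Printing Implicit Defensive.

Definition proper_col (V : finType) (e : rel V) (k : nat) (f : V -> 'I_k) : bool :=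
  [forall u, forall v, e u v ==> (f u != f v)].

Definition complete_col (V : finType) (e : rel V) (k : nat) (f : V -> 'I_k) : bool :=
  [forall c1 : 'I_k, forall c2 : 'I_k,
     (c1 != c2) ==> [exists u, exists v, [&& e u v, f u == c1 & f v == c2]]].

Definition has_achromatic_col (V : finType) (e : rel V) (k : nat) : bool :=
  [exists f : {ffun V -> 'I_k}, proper_col e f && complete_col e f].

(* Any such colouring with k >= 2 uses every colour, so k <= #|V|; the search
   range 0..#|V| is therefore exhaustive (k = 0 always works trivially when V is
   empty, k = 1 when V is nonempty). *)
Definition achromatic_number (V : finType) (e : rel V) : nat :=
  \max_(k < #|V|.+1 | has_achromatic_col e k) k.

Definition complete_rel (n : nat) : rel 'I_n := fun x y => x != y.

Definition cart_prod (V1 V2 : finType) (e1 : rel V1) (e2 : rel V2) : rel (V1 * V2) :=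
  fun x y => (e1 x.1 y.1 && (x.2 == y.2)) || (e2 x.2 y.2 && (x.1 == y.1)).

(* Write q = 2 k + 3 and colour the rook's graph K_6 □ K_q, where a colouring is proper
   iff it is injective on rows and columns, and two colours are adjacent as soon as they
   share a row or a column.  The six rows are the six edges of K_4.  The first three
   columns carry nine block colours: each perfect matching of K_4 is a pair of rows
   carrying a 2 x 3 Latin rectangle on its own three colours.  The other 2 k columns
   carry the 4 k tail colours (m, t), m < k, t < 4, each used once in each of the three
   rows (edges) through the vertex t, cyclically in m along the k column pairs; a shift
   by one separates the two rows that would meet in a column.  Two tail colours meet in
   the row of the edge joining their vertices, a tail and a block colour meet because a
   star of K_4 meets every perfect matching, and two block colours meet in the block. *)

From mathcomp Require Import all_boot zify.

Set Implicit Arguments. Unset Strict Implicit. Unset Printing Implicit Defensive.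

Lemma achromatic_number_ge (V : finType) (e : rel V) k :
  k <= #|V| -> has_achromatic_col e k -> k <= achromatic_number e.
Proof. by rewrite -ltnS => k_lt; exact: (leq_bigmax_cond (Ordinal k_lt)). Qed.

Lemma rook_adjE m n (x y : 'I_m * 'I_n) :
  cart_prod (@complete_rel m) (@complete_rel n) x y =
  (x != y) && ((x.1 == y.1) || (x.2 == y.2)).
Proof.
case: x y => [r j] [r' j']; rewrite /cart_prod /complete_rel xpair_eqE /=.
by case: (r == r'); case: (j == j').
Qed.

Lemma rook_achromatic_ge m n c (f : nat -> nat -> nat) :
  c <= m * n ->
  (forall r j, r < m -> j < n -> f r j < c) ->
  (forall r j j', r < m -> j < n -> j' < n -> f r j = f r j' -> j = j') ->
  (forall r r' j, r < m -> r' < m -> j < n -> f r j = f r' j -> r = r') ->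
  (forall a b, a < c -> b < c -> a != b -> exists r j r' j',
     [/\ r < m, j < n, r' < m & j' < n] /\
     [/\ (r == r') || (j == j'), f r j = a & f r' j' = b]) ->
  c <= achromatic_number (cart_prod (@complete_rel m) (@complete_rel n)).
Proof.
move=> c_le f_lt row_inj col_inj on_line.
apply: achromatic_number_ge; first by rewrite card_prod !card_ord.
pose g := [ffun x : 'I_m * 'I_n => Ordinal (f_lt _ _ (ltn_ord x.1) (ltn_ord x.2))].
apply/existsP; exists g; apply/andP; split.
  apply/forallP=> -[r j]; apply/forallP=> -[r' j']; apply/implyP.
  rewrite rook_adjE xpair_eqE negb_and !ffunE => /andP[neq line].
  rewrite -val_eqE /=; move: neq; case/orP: line => /eqP /= <-.
    by rewrite eqxx /=; apply: contra => /eqP/row_inj eqj; apply/eqP/val_inj/eqj.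
  by rewrite eqxx orbF; apply: contra => /eqP/col_inj eqr; apply/eqP/val_inj/eqr.
apply/forallP=> a; apply/forallP=> b; apply/implyP=> neq_ab.
have [r [j [r' [j' [[hr hj hr' hj'] [line fa fb]]]]]] :=
  on_line a b (ltn_ord a) (ltn_ord b) neq_ab.
apply/existsP; exists (Ordinal hr, Ordinal hj).
apply/existsP; exists (Ordinal hr', Ordinal hj').
rewrite rook_adjE !ffunE -!val_eqE /= fa fb !eqxx !andbT {}line andbT.
apply: contra neq_ab => /eqP[er ej]; apply/eqP/val_inj.
by rewrite /= -fa -fb er ej.
Qed.

Lemma all_iotaP n (P : pred nat) : reflect (forall x, x < n -> P x) (all P (iota 0 n)).
Proof.
by apply: (iffP allP) => allP x; have := allP x; rewrite mem_iota.
Qed.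

Lemma has_iotaP n (P : pred nat) : reflect (exists2 x, x < n & P x) (has P (iota 0 n)).
Proof.
by apply: (iffP hasP) => -[x]; rewrite ?mem_iota => ??; exists x; rewrite ?mem_iota.
Qed.

(* Row r is the edge {row_end r 0, row_end r 1} of K_4, and row_group r numbers
   the perfect matching {01, 23}, {02, 13} or {03, 12} of K_4 containing it. *)
Definition row_end (r s : nat) : nat :=
  match r, s with
  | 0, 0 => 0 | 0, _ => 1
  | 1, 0 => 2 | 1, _ => 3
  | 2, 0 => 2 | 2, _ => 0
  | 3, 0 => 0 | 3, _ => 3
  | 4, 0 => 1 | 4, _ => 2
  | _, 0 => 3 | _, _ => 1
  end.

Definition row_group (r : nat) : nat :=
  match r with 0 | 1 => 0 | 2 | 5 => 1 | _ => 2 end.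

Definition row_half (r : nat) : nat := match r with 1 | 4 | 5 => 1 | _ => 0 end.

Definition row_shift (r s : nat) : nat :=
  match r, s with 2, 0 | 3, _ | 5, 1 => 1 | _, _ => 0 end.

(* The two rows of group g carry a 2 x 3 Latin rectangle on the colours 3 g, 3 g + 1,
   3 g + 2; column j misses 3 g + 2 - j, so colours of different groups share a column. *)
Definition block (r j : nat) : nat := 3 * row_group r + (row_half r + 3 - j) %% 3.

Lemma row_group_lt r : row_group r < 3.
Proof. by case: r => [|[|[|[|[|[|r]]]]]]. Qed.

Lemma row_half_lt r : row_half r < 2.
Proof. by case: r => [|[|[|[|[|[|r]]]]]]. Qed.

Lemma row_end_lt r s : row_end r s < 4.
Proof. by case: r => [|[|[|[|[|[|r]]]]]]; case: s => [|[|s]]. Qed.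

Lemma row_shift_lt r s : row_shift r s < 2.
Proof. by case: r => [|[|[|[|[|[|r]]]]]]; case: s => [|[|s]]. Qed.

Lemma row_group_half_inj r r' : r < 6 -> r' < 6 ->
  row_group r = row_group r' -> row_half r = row_half r' -> r = r'.
Proof. by case: r => [|[|[|[|[|[|r]]]]]] //; case: r' => [|[|[|[|[|[|r']]]]]]. Qed.

Lemma row_end_inj r s s' : r < 6 -> s < 2 -> s' < 2 ->
  row_end r s = row_end r s' -> s = s'.
Proof. by case: r => [|[|[|[|[|[|r]]]]]] //; case: s => [|[|s]] //; case: s' => [|[|s']]. Qed.

Lemma row_shift_sep r r' s : r < 6 -> r' < 6 -> s < 2 -> r != r' ->
  row_end r s = row_end r' s -> row_shift r s != row_shift r' s.
Proof.
by case: r => [|[|[|[|[|[|r]]]]]] //; case: r' => [|[|[|[|[|[|r']]]]]] //;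
  case: s => [|[|s]].
Qed.

Lemma block_line a b : a < 9 -> b < 9 -> a != b ->
  exists r j r' j', [/\ r < 6, j < 3, r' < 6 & j' < 3] /\
                    [/\ (r == r') || (j == j'), block r j = a & block r' j' = b].
Proof.
have /all_iotaP check : all (fun a => all (fun b => (a != b) ==>
  has (fun r => has (fun j => has (fun r' => has (fun j' =>
    [&& (r == r') || (j == j'), block r j == a & block r' j' == b])
  (iota 0 3)) (iota 0 6)) (iota 0 3)) (iota 0 6)) (iota 0 9)) (iota 0 9) by [].
move=> /check/all_iotaP check_a /check_a/implyP check_ab /check_ab.
case/has_iotaP=> r hr /has_iotaP[j hj /has_iotaP[r' hr' /has_iotaP[j' hj']]].
by case/and3P=> line /eqP block_a /eqP block_b; exists r, j, r', j'.
Qed.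

Lemma block_lt r j : block r j < 9.
Proof. by have := row_group_lt r; rewrite /block; lia. Qed.

Lemma block_row_inj r j j' : j < 3 -> j' < 3 -> block r j = block r j' -> j = j'.
Proof. by have := row_half_lt r; rewrite /block; lia. Qed.

Lemma block_col_inj r r' j : r < 6 -> r' < 6 -> j < 3 -> block r j = block r' j -> r = r'.
Proof.
move=> hr hr' hj eq_block; apply: row_group_half_inj => //.
  by move: eq_block; have := row_group_lt r; have := row_group_lt r'; rewrite /block; lia.
by move: eq_block; have := row_half_lt r; have := row_half_lt r'; rewrite /block; lia.
Qed.

Lemma block_in_row a r : a < 9 -> row_group r = a %/ 3 ->
  exists2 j, j < 3 & block r j = a.
Proof.
move=> ha group_r; exists ((row_half r + 3 - a %% 3) %% 3); first lia.
by have := row_half_lt r; rewrite /block group_r; lia.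
Qed.

Definition colour_class (a : nat) : nat := if a < 9 then a %/ 3 else 3 + (a - 9) %% 4.

Definition class_row (c r : nat) : bool :=
  if c < 3 then row_group r == c else (row_end r 0 == c - 3) || (row_end r 1 == c - 3).

Lemma class_rows_meet c c' : c < 7 -> c' < 7 -> ~~ ((c < 3) && (c' < 3)) ->
  exists2 r, r < 6 & class_row c r && class_row c' r.
Proof.
have /all_iotaP check : all (fun c => all (fun c' => ~~ ((c < 3) && (c' < 3)) ==>
  has (fun r => class_row c r && class_row c' r) (iota 0 6)) (iota 0 7)) (iota 0 7)
  by [].
by move=> /check/all_iotaP check_c /check_c/implyP check_cc /check_cc/has_iotaP.
Qed.

Section Colouring.

Variable k : nat.
Hypothesis k_ge2 : 2 <= k.

Definition tail_colour (r i s : nat) : nat :=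
  9 + 4 * ((i + row_shift r s) %% k) + row_end r s.

Lemma tail_colour_row_inj r i i' s s' : r < 6 -> i < k -> i' < k -> s < 2 -> s' < 2 ->
  tail_colour r i s = tail_colour r i' s' -> i = i' /\ s = s'.
Proof.
move=> hr hi hi' hs hs' eq_tail.
have [eq_shifted eq_end] : (i + row_shift r s) %% k = (i' + row_shift r s') %% k /\
                           row_end r s = row_end r s'.
  by move: eq_tail; have := row_end_lt r s; have := row_end_lt r s'; rewrite /tail_colour; lia.
have eq_s := row_end_inj hr hs hs' eq_end; split=> //.
by move/eqP: eq_shifted; rewrite eq_s eqn_modDr !modn_small // => /eqP.
Qed.

Lemma tail_colour_col_inj r r' i s : r < 6 -> r' < 6 -> s < 2 -> r != r' ->
  tail_colour r i s != tail_colour r' i s.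
Proof.
move=> hr hr' hs neq_r; apply/eqP => eq_tail.
have [eq_shifted eq_end] : (i + row_shift r s) %% k = (i + row_shift r' s) %% k /\
                           row_end r s = row_end r' s.
  by move: eq_tail; have := row_end_lt r s; have := row_end_lt r' s; rewrite /tail_colour; lia.
move/eqP: (row_shift_sep hr hr' hs neq_r eq_end); apply.
have := row_shift_lt r s; have := row_shift_lt r' s => lt_shift lt_shift'.
by move/eqP: eq_shifted; rewrite eqn_modDl !modn_small ?(leq_trans _ k_ge2) // => /eqP.
Qed.

Lemma tail_colour_in_row r s m : m < k ->
  exists2 i, i < k & tail_colour r i s = 9 + 4 * m + row_end r s.
Proof.
move=> hm; have lt_shift := row_shift_lt r s.
exists ((m + (k - row_shift r s)) %% k); first by rewrite ltn_mod; lia.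
have shift_back : ((m + (k - row_shift r s)) %% k + row_shift r s) %% k = m.
  by rewrite modnDml -addnA subnK ?modnDr ?modn_small //; lia.
by rewrite /tail_colour shift_back.
Qed.

Definition colouring (r j : nat) : nat :=
  if j < 3 then block r j else tail_colour r ((j - 3) %/ 2) ((j - 3) %% 2).

Lemma colouring_lt r j : j < 2 * k + 3 -> colouring r j < 4 * k + 9.
Proof.
move=> hj; rewrite /colouring; case: ifP => _; first by have := block_lt r j; lia.
have := ltn_pmod ((j - 3) %/ 2 + row_shift r ((j - 3) %% 2)) (ltnW k_ge2).
by have := row_end_lt r ((j - 3) %% 2); rewrite /tail_colour; lia.
Qed.

Lemma colouring_row_inj r j j' : r < 6 -> j < 2 * k + 3 -> j' < 2 * k + 3 ->
  colouring r j = colouring r j' -> j = j'.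
Proof.
move=> hr hj hj'; rewrite /colouring.
case: ifP => hj3; case: ifP => hj'3; first exact: block_row_inj.
- by have := block_lt r j; rewrite /tail_colour; lia.
- by have := block_lt r j'; rewrite /tail_colour; lia.
by case/tail_colour_row_inj; lia.
Qed.

Lemma colouring_col_inj r r' j : r < 6 -> r' < 6 -> j < 2 * k + 3 ->
  colouring r j = colouring r' j -> r = r'.
Proof.
move=> hr hr' hj; rewrite /colouring; case: ifP => hj3; first exact: block_col_inj.
case: (eqVneq r r') => // neq_r eq_tail; have hs : (j - 3) %% 2 < 2 by lia.
by have := tail_colour_col_inj ((j - 3) %/ 2) hr hr' hs neq_r; rewrite eq_tail eqxx.
Qed.

Lemma colouring_in_row a r : a < 4 * k + 9 -> r < 6 -> class_row (colour_class a) r ->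
  exists2 j, j < 2 * k + 3 & colouring r j = a.
Proof.
move=> ha hr; rewrite /class_row /colour_class; case: (ltnP a 9) => ha9.
  rewrite ifT; last lia.
  move=> /eqP/(block_in_row ha9)[j hj block_j].
  by exists j; [lia | rewrite /colouring hj].
rewrite ltnNge leq_addr addKn /= => row_a.
set t := (a - 9) %% 4; set m := (a - 9) %/ 4.
have hm : m < k by rewrite /m; lia.
have [s hs end_s] : exists2 s, s < 2 & row_end r s = t.
  by case/orP: row_a => /eqP end_s; [exists 0 | exists 1].
have [i hi tail_i] := tail_colour_in_row r s hm.
exists (3 + (2 * i + s)); first lia.
rewrite /colouring ltnNge leq_addr /=.
have -> : (3 + (2 * i + s) - 3) %/ 2 = i by lia.
have -> : (3 + (2 * i + s) - 3) %% 2 = s by lia.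
by rewrite tail_i end_s /t /m; lia.
Qed.

Lemma colouring_line a b : a < 4 * k + 9 -> b < 4 * k + 9 -> a != b ->
  exists r j r' j', [/\ r < 6, j < 2 * k + 3, r' < 6 & j' < 2 * k + 3] /\
    [/\ (r == r') || (j == j'), colouring r j = a & colouring r' j' = b].
Proof.
move=> ha hb neq_ab.
have [/andP[ha9 hb9] | not_both_block] := boolP ((a < 9) && (b < 9)).
  have [r [j [r' [j' [[hr hj hr' hj'] [line block_a block_b]]]]]] := block_line ha9 hb9 neq_ab.
  exists r, j, r', j'; split; split; rewrite /colouring ?hj ?hj' //; lia.
have [r hr /andP[row_a row_b]] : exists2 r, r < 6 &
    class_row (colour_class a) r && class_row (colour_class b) r.
  by apply: class_rows_meet; rewrite /colour_class; do ?case: ifP; lia.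
have [j hj col_a] := colouring_in_row ha hr row_a.
have [j' hj' col_b] := colouring_in_row hb hr row_b.
by exists r, j, r, j'; rewrite eqxx.
Qed.

End Colouring.

Theorem proposition3 (q : nat) (hq : 7 <= q) (hodd : odd q) :
  2 * q + 3 <= achromatic_number (cart_prod (@complete_rel 6) (@complete_rel q)).
Proof.
have [k k_ge2 ->] : exists2 k, 2 <= k & q = 2 * k + 3.
  by exists (q./2 - 1); move: (odd_double_half q); rewrite hodd -muln2; lia.
have -> : 2 * (2 * k + 3) + 3 = 4 * k + 9 by lia.
apply: (rook_achromatic_ge (f := colouring k)).
- lia.
- by move=> r j _; apply: colouring_lt.
- exact: colouring_row_inj.
- exact: colouring_col_inj.
- exact: colouring_line.
Qed.
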